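(* Let $G$ be a graph with diameter $h$ and with hyperbolicity $\delta(G)=h$. Then for each quadruple $a,b,c,d\in V(G)$ with $\delta(a,b,c,d)=h$, exactly two disjoint pairs among $a,b,c,d$ are at distance $h$ and all the other pairs are at distance $h/2$.
   Context: For a graph $G=(V,E)$, $\mathrm{dist}(x,y)$ denotes the length of a shortest $x$-$y$ path ($\infty$ if none exists). For $a,b,c,d\in V$ let $D_1=\mathrm{dist}(a,b)+\mathrm{dist}(c,d)$, $D_2=\mathrm{dist}(a,c)+\mathrm{dist}(b,d)$, $D_3=\mathrm{dist}(a,d)+\mathrm{dist}(b,c)$, and define $\delta(a,b,c,d)=|D_i-D_j|$ where $\{i,j,k\}=\{1,2,3\}$ and $D_k\le\min\{D_i,D_j\}$ (i.e., the difference of the two largest of the three sums). The hyperbolicity of $G$ is $\delta(G)=\max_{a,b,c,d\in V}\delta(a,b,c,d)$. *)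

(* Finite simple graphs as symmetric irreflexive relations. *)
From mathcomp Require Import all_boot.
Set Implicit Arguments. Unset Strict Implicit. Unset Printing Implicit Defensive.

Section Graph.
Variables (T : finType) (e : rel T).

Definition walkb (k : nat) (x y : T) : bool :=
  [exists p : k.-tuple T, path e x p && (last x p == y)].

(* Every
   shortest walk has length < #|T|, so searching k in [0, #|T|) suffices;
   if x and y are disconnected the value is #|T| (meaningless: we only use
   it on connected graphs, where it is the true graph distance). *)
Definition dist (x y : T) : nat := find (fun k => walkb k x y) (iota 0 #|T|).

Definition connected_graph : Prop := forall x y : T, connect e x y.

Definition diameter : nat := \max_(x : T) \max_(y : T) dist x y.

Definition delta4 (a b c d : T) : nat :=
  let D1 := dist a b + dist c d in
  let D2 := dist a c + dist b d in
  let D3 := dist a d + dist b c in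
  let mx := maxn D1 (maxn D2 D3) in
  let mn := minn D1 (minn D2 D3) in
  let md := D1 + D2 + D3 - mx - mn in
  mx - md.

Definition hyperbolicity : nat :=
  \max_(a : T) \max_(b : T) \max_(c : T) \max_(d : T) delta4 a b c d.

End Graph.

(* If D1 = ab + cd is the largest of the three sums, the four triangle
   inequalities ab <= ac + bc, ab <= ad + bd, cd <= ac + ad, cd <= bc + bd
   add up to D1 <= D2 + D3.  Hence
     delta = D1 - max(D2, D3) <= D1 - (D2 + D3)/2 <= D1/2 <= h,
   and delta = h forces ab = cd = h and D2 = D3 = h; then the four triangle
   inequalities are equalities, which pins each of ac, bd, ad, bc to h/2. *)

From mathcomp Require Import all_boot zify.
Set Implicit Arguments. Unset Strict Implicit. Unset Printing Implicit Defensive.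

Section Walks.
Variables (T : finType) (e : rel T).

Lemma walkb_path x p : path e x p -> walkb e (size p) x (last x p).
Proof. by move=> xp; apply/existsP; exists (in_tuple p); rewrite xp eqxx. Qed.

Lemma walkb_exists_path k x y :
  walkb e k x y -> exists2 p, path e x p & size p = k /\ last x p = y.
Proof. by case/existsP=> p /andP[xp /eqP <-]; exists p; rewrite ?size_tuple. Qed.

Lemma dist_le_walkb k x y : walkb e k x y -> dist e x y <= k.
Proof.
move=> xy; rewrite /dist; have [ltkT | leTk] := ltnP k #|T|.
  by rewrite leqNgt; apply/negP => /(before_find 0); rewrite nth_iota ?add0n ?xy.
by apply: leq_trans (find_size _ _) _; rewrite size_iota.
Qed.

Lemma walkb_dist x y : connect e x y -> walkb e (dist e x y) x y.
Proof.
case/connectP=> p xp ->; have [q xq uq _] := shortenP xp.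
have ltqT : size q < #|T|.
  by move/card_uniqP: uq => /= card_q; rewrite -card_q max_card.
have has_walk : has (fun k => walkb e k x (last x q)) (iota 0 #|T|).
  by apply/hasP; exists (size q); [rewrite mem_iota | apply: walkb_path].
have := nth_find 0 has_walk; rewrite nth_iota ?add0n //.
by rewrite has_find size_iota in has_walk.
Qed.

Lemma walkb_cat k1 k2 x y z :
  walkb e k1 x y -> walkb e k2 y z -> walkb e (k1 + k2) x z.
Proof.
case/walkb_exists_path=> p xp [<- py]; case/walkb_exists_path=> q yq [<- qz].
by rewrite -size_cat -qz -py -last_cat; apply: walkb_path; rewrite cat_path xp py.
Qed.

Hypothesis e_sym : symmetric e.

Lemma walkb_rev k x y : walkb e k x y -> walkb e k y x.
Proof.
case/walkb_exists_path=> p xp [<- <-].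
have rev_xp : path e (last x p) (rev (belast x p)).
  by rewrite rev_path; apply: sub_path xp => u v; rewrite e_sym.
have := walkb_path rev_xp; rewrite size_rev size_belast.
by case: p {xp rev_xp} => //= u p; rewrite rev_cons last_rcons.
Qed.

Hypothesis e_conn : connected_graph e.

Lemma distC x y : dist e x y = dist e y x.
Proof.
by apply/eqP; rewrite eqn_leq !dist_le_walkb // walkb_rev // walkb_dist.
Qed.

Lemma dist_triangle x y z : dist e x z <= dist e x y + dist e y z.
Proof. by apply: dist_le_walkb; apply: walkb_cat; apply: walkb_dist. Qed.

Lemma dist_le_diameter x y : dist e x y <= diameter e.
Proof.
rewrite /diameter; apply: leq_trans (leq_bigmax x).
exact: (leq_bigmax (F := dist e x)).
Qed.

End Walks.

(* [delta4 e a b c d] unfolds to [max_sub_median] of its three sums. *)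
Definition max_sub_median (D1 D2 D3 : nat) : nat :=
  let mx := maxn D1 (maxn D2 D3) in
  let mn := minn D1 (minn D2 D3) in
  mx - (D1 + D2 + D3 - mx - mn).

Lemma max_sub_medianP D1 D2 D3 :
  [\/ [/\ D2 <= D1, D3 <= D1 & max_sub_median D1 D2 D3 = D1 - maxn D2 D3],
      [/\ D1 <= D2, D3 <= D2 & max_sub_median D1 D2 D3 = D2 - maxn D1 D3] |
      [/\ D1 <= D3, D2 <= D3 & max_sub_median D1 D2 D3 = D3 - maxn D1 D2]].
Proof.
rewrite /max_sub_median; cbv zeta.
case: (leqP D2 D1) => ?; case: (leqP D3 D1) => ?; case: (leqP D3 D2) => ?.
all: first [ by apply: Or31; split; lia
           | by apply: Or32; split; lia
           | by apply: Or33; split; lia ].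
Qed.

Lemma max_sum_sub_max_tight x1 x2 y1 y2 z1 z2 h :
  x1 <= h -> x2 <= h -> y1 <= h -> y2 <= h -> z1 <= h -> z2 <= h ->
  x1 <= y1 + z2 -> x1 <= z1 + y2 -> x2 <= y1 + z1 -> x2 <= z2 + y2 ->
  x1 + x2 - maxn (y1 + y2) (z1 + z2) = h ->
  x1 = h /\ x2 = h /\ 2 * y1 = h /\ 2 * y2 = h /\ 2 * z1 = h /\ 2 * z2 = h.
Proof. by move=> *; lia. Qed.

Section FourPoint.
Variables (T : Type) (m : T -> T -> nat) (h : nat).
Hypotheses (mC : forall x y, m x y = m y x)
           (m_triangle : forall x y z, m x z <= m x y + m y z)
           (m_le : forall x y, m x y <= h).

Lemma m_triangle_r x y z : m x y <= m x z + m y z.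
Proof. by rewrite (mC y z). Qed.

Lemma m_triangle_l x y z : m x y <= m z x + m z y.
Proof. by rewrite (mC z x). Qed.

Lemma four_point_extremal a b c d :
  max_sub_median (m a b + m c d) (m a c + m b d) (m a d + m b c) = h ->
  (m a b = h /\ m c d = h /\ 2 * m a c = h /\ 2 * m b d = h /\
   2 * m a d = h /\ 2 * m b c = h) \/
  (m a c = h /\ m b d = h /\ 2 * m a b = h /\ 2 * m c d = h /\
   2 * m a d = h /\ 2 * m b c = h) \/
  (m a d = h /\ m b c = h /\ 2 * m a b = h /\ 2 * m c d = h /\
   2 * m a c = h /\ 2 * m b d = h).
Proof.
case: (max_sub_medianP (m a b + m c d) (m a c + m b d) (m a d + m b c))
  => -[_ _ ->] gap_h; [left | right; left | right; right];
  apply: max_sum_sub_max_tight gap_h;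
  by [apply: m_le | apply: m_triangle | apply: m_triangle_r | apply: m_triangle_l].
Qed.
End FourPoint.

Theorem lemma2 (T : finType) (e : rel T) (h : nat) :
  symmetric e -> irreflexive e -> connected_graph e ->
  diameter e = h -> hyperbolicity e = h ->
  forall a b c d : T, delta4 e a b c d = h ->
  (* the matching {ab, cd} at distance h, the other four pairs at h/2 *)
  (dist e a b = h /\ dist e c d = h /\
   2 * dist e a c = h /\ 2 * dist e b d = h /\
   2 * dist e a d = h /\ 2 * dist e b c = h) \/
  (* the matching {ac, bd} *)
  (dist e a c = h /\ dist e b d = h /\
   2 * dist e a b = h /\ 2 * dist e c d = h /\
   2 * dist e a d = h /\ 2 * dist e b c = h) \/
  (* the matching {ad, bc} *)
  (dist e a d = h /\ dist e b c = h /\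
   2 * dist e a b = h /\ 2 * dist e c d = h /\
   2 * dist e a c = h /\ 2 * dist e b d = h).
Proof.
move=> e_sym _ e_conn diam_h _ a b c d.
apply: (@four_point_extremal T (dist e) h).
- exact: distC.
- exact: dist_triangle.
- by move=> x y; rewrite -diam_h dist_le_diameter.
Qed.
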